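(* Let $s>0$. For all $\tau>0$, $$2\pi\Big(1+\frac{4s^2}{\tau^2}\Big)^{1/2}\le\sup_{\xi\in\mathbb R^3}\mu_s*\mu_s(\xi,\tau)\le2\pi\Big(1+\frac{2s}{\tau}\Big).$$ In particular $\lim_{\tau\to\infty}\sup_{\xi\in\mathbb R^3}\mu_s*\mu_s(\xi,\tau)=2\pi$.
   Context: For $s>0$, $\mu_s$ is the measure on $\mathbb R^4$ with $\int g\,d\mu_s=\int_{|y|>s}g(y,\sqrt{|y|^2-s^2})\frac{dy}{\sqrt{|y|^2-s^2}}$, and $\mu_s*\mu_s$ is its self-convolution, identified with its (Lebesgue) density on $\mathbb R^4$, which for $\tau\ge0$ is given by the explicit formula $\mu_s*\mu_s(\xi,\tau)=\frac{2\pi}{|\xi|}\big(|\xi|(1+\frac{4s^2}{\tau^2-|\xi|^2})^{1/2}\mathbb 1_{\{|\xi|<\sqrt{\tau^2+s^2}-s\}}+\tau\mathbb 1_{\{\sqrt{\tau^2+s^2}-s\le|\xi|\le\sqrt{\tau^2+4s^2}\}}+(\tau-|\xi|(1+\frac{4s^2}{\tau^2-|\xi|^2})^{1/2})\mathbb 1_{\{\sqrt{\tau^2+4s^2}<|\xi|\le\sqrt{\tau^2+s^2}+s\}}\big)$, with value $2\pi(1+4s^2/\tau^2)^{1/2}$ at $\xi=0$. *)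

From HB Require Import structures.
From mathcomp Require Import all_boot all_order all_algebra.
From mathcomp Require Import all_classical all_reals all_analysis.
Set Implicit Arguments. Unset Strict Implicit. Unset Printing Implicit Defensive.
Import Order.TTheory GRing.Theory Num.Theory.
Import numFieldNormedType.Exports.
Local Open Scope ring_scope.

Definition enorm3 (R : realType) (xi : 'rV[R]_3) : R :=
  Num.sqrt (\sum_(i < 3) xi ord0 i ^+ 2).

(* The (Lebesgue) density of mu_s * mu_s at (xi, tau), for tau >= 0, given by
   the explicit formula of the paper; at xi = 0 it is 2 pi (1 + 4 s^2/tau^2)^(1/2). *)
Definition musconv (R : realType) (s : R) (xi : 'rV[R]_3) (tau : R) : R :=
  let r := enorm3 xi in
  if r == 0 then 2 * pi * Num.sqrt (1 + 4 * s ^+ 2 / tau ^+ 2)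
  else (2 * pi / r) *
    ((if r < Num.sqrt (tau ^+ 2 + s ^+ 2) - s then
        r * Num.sqrt (1 + 4 * s ^+ 2 / (tau ^+ 2 - r ^+ 2)) else 0)
     + (if (Num.sqrt (tau ^+ 2 + s ^+ 2) - s <= r) && (r <= Num.sqrt (tau ^+ 2 + 4 * s ^+ 2))
        then tau else 0)
     + (if (Num.sqrt (tau ^+ 2 + 4 * s ^+ 2) < r) && (r <= Num.sqrt (tau ^+ 2 + s ^+ 2) + s)
        then tau - r * Num.sqrt (1 + 4 * s ^+ 2 / (tau ^+ 2 - r ^+ 2)) else 0)).

From HB Require Import structures.
From mathcomp Require Import all_boot all_order all_algebra.
From mathcomp Require Import all_classical all_reals all_analysis.
From mathcomp Require Import ring lra.
Set Implicit Arguments. Unset Strict Implicit. Unset Printing Implicit Defensive.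
Import Order.TTheory GRing.Theory Num.Theory.
Import numFieldNormedType.Exports.
Local Open Scope ring_scope.
Local Open Scope classical_set_scope.

(* Write [q = sqrt (tau^2 + s^2)], so that [(q - s) (q + s) = tau^2] and
   [q <= tau + s]. On the ball [|xi| < q - s] the density is
   [2 pi sqrt (1 + 4 s^2 / (tau^2 - |xi|^2))], and [tau^2 - |xi|^2 >= 2 s (q - s)]
   reduces the upper bound to [2 (tau + s) >= q + s]. Outside that ball the
   bracketed factor of the density is at most [tau] while [|xi| >= q - s], so
   the density is at most [2 pi tau / (q - s) = 2 pi (q + s) / tau]. The lower
   bound is the value at [xi = 0], and both bounds tend to [2 pi]. *)

Lemma sqrtr_le (R : rcfType) (x y : R) : 0 <= y -> x <= y ^+ 2 -> Num.sqrt x <= y.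
Proof.
move=> y_ge0 x_le; rewrite -(ger0_norm y_ge0) -sqrtr_sqr ler_sqrt //.
exact: sqr_ge0.
Qed.

Definition musconv_profile (R : rcfType) (s tau r : R) : R :=
  (if r < Num.sqrt (tau ^+ 2 + s ^+ 2) - s then
     r * Num.sqrt (1 + 4 * s ^+ 2 / (tau ^+ 2 - r ^+ 2)) else 0)
  + (if (Num.sqrt (tau ^+ 2 + s ^+ 2) - s <= r) && (r <= Num.sqrt (tau ^+ 2 + 4 * s ^+ 2))
     then tau else 0)
  + (if (Num.sqrt (tau ^+ 2 + 4 * s ^+ 2) < r) && (r <= Num.sqrt (tau ^+ 2 + s ^+ 2) + s)
     then tau - r * Num.sqrt (1 + 4 * s ^+ 2 / (tau ^+ 2 - r ^+ 2)) else 0).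

Lemma sqrt_sqrD_gt (R : rcfType) (a b : R) : 0 < a -> 0 <= b ->
  b < Num.sqrt (a ^+ 2 + b ^+ 2).
Proof.
move=> a_gt0 b_ge0; have := exprn_gt0 2 a_gt0; have := sqr_ge0 b => ? ?.
by rewrite -[b in b < _]ger0_norm // -sqrtr_sqr ltr_sqrt; lra.
Qed.

Lemma sqr_sqrt_sqrD (R : rcfType) (a b : R) :
  Num.sqrt (a ^+ 2 + b ^+ 2) ^+ 2 = a ^+ 2 + b ^+ 2.
Proof. by rewrite sqr_sqrtr // addr_ge0 ?sqr_ge0. Qed.

Lemma sqrt_sqrD_le (R : rcfType) (a b : R) : 0 <= a -> 0 <= b ->
  Num.sqrt (a ^+ 2 + b ^+ 2) <= a + b.
Proof. by move=> a_ge0 b_ge0; apply: sqrtr_le; nra. Qed.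

Section Profile.
Variables (R : rcfType) (s tau : R).

Local Notation q := (Num.sqrt (tau ^+ 2 + s ^+ 2)).

Lemma inner_shell_le r : 0 < s -> 0 < tau -> 0 <= r < q - s ->
  Num.sqrt (1 + 4 * s ^+ 2 / (tau ^+ 2 - r ^+ 2)) <= 1 + 2 * s / tau.
Proof.
move=> s_gt0 tau_gt0 /andP[r_ge0 r_lt].
have q_le := sqrt_sqrD_le (ltW tau_gt0) (ltW s_gt0).
have sqr_q := sqr_sqrt_sqrD tau s.
set d := tau ^+ 2 - r ^+ 2.
have d_ge : 2 * s * (q - s) <= d by rewrite /d; nra.
have d_gt0 : 0 < d by nra.
have key : s * tau ^+ 2 <= (tau + s) * d by nra.
apply: sqrtr_le; first by rewrite addr_ge0 ?divr_ge0 //; lra.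
rewrite -subr_ge0.
have -> : (1 + 2 * s / tau) ^+ 2 - (1 + 4 * s ^+ 2 / d)
          = ((tau + s) * d - s * tau ^+ 2) * (4 * s / (tau ^+ 2 * d)).
  by field; rewrite ?gt_eqF.
apply: mulr_ge0; first lra.
by rewrite divr_ge0 ?mulr_ge0 ?exprn_ge0 //; lra.
Qed.

Lemma outside_inner_shell_le r : 0 < s -> 0 < tau -> q - s <= r ->
  tau / r <= 1 + 2 * s / tau.
Proof.
move=> s_gt0 tau_gt0 r_ge.
have q_gt := sqrt_sqrD_gt tau_gt0 (ltW s_gt0).
have q_le := sqrt_sqrD_le (ltW tau_gt0) (ltW s_gt0).
have sqr_q := sqr_sqrt_sqrD tau s.
have r_gt0 : 0 < r by lra.
have -> : (1 + 2 * s / tau) = r * (tau + 2 * s) / tau / r by field; rewrite ?gt_eqF.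
rewrite ler_pM2r ?invr_gt0 // ler_pdivlMr //; nra.
Qed.

Lemma musconv_profile_le_tau r : 0 < s -> 0 < tau -> q - s <= r ->
  musconv_profile s tau r <= tau.
Proof.
move=> s_gt0 tau_gt0 r_ge.
have q_gt := sqrt_sqrD_gt tau_gt0 (ltW s_gt0).
have r_ge0 : 0 <= r by lra.
rewrite /musconv_profile ltNge r_ge /= add0r.
have S_ge0 := sqrtr_ge0 (1 + 4 * s ^+ 2 / (tau ^+ 2 - r ^+ 2)).
have rS_ge0 := mulr_ge0 r_ge0 S_ge0.
by case: leP => _ /=; [|case: ifP => _]; lra.
Qed.

Lemma musconv_profile_div_le r : 0 < s -> 0 < tau -> 0 < r ->
  musconv_profile s tau r / r <= 1 + 2 * s / tau.
Proof.
move=> s_gt0 tau_gt0 r_gt0; have [r_lt | r_ge] := ltP r (q - s); last first.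
  apply: le_trans (outside_inner_shell_le s_gt0 tau_gt0 r_ge).
  by rewrite ler_pM2r ?invr_gt0 // musconv_profile_le_tau.
have q_le := sqrt_sqrD_le (ltW tau_gt0) (ltW s_gt0).
have tau_le : tau <= Num.sqrt (tau ^+ 2 + 4 * s ^+ 2).
  by rewrite -{1}(ger0_norm (ltW tau_gt0)) -sqrtr_sqr ler_sqrt; nra.
rewrite /musconv_profile r_lt.
have -> : (q - s <= r) = false by rewrite leNgt r_lt.
have -> : (Num.sqrt (tau ^+ 2 + 4 * s ^+ 2) < r) = false.
  by apply/negbTE; rewrite -leNgt; lra.
rewrite !addr0 mulrC mulKf ?gt_eqF //.
by apply: inner_shell_le; rewrite ?(ltW r_gt0) ?r_lt.
Qed.

Lemma sqrt_musconv0_le : 0 < s -> 0 < tau ->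
  Num.sqrt (1 + 4 * s ^+ 2 / tau ^+ 2) <= 1 + 2 * s / tau.
Proof.
move=> s_gt0 tau_gt0; have := @inner_shell_le 0 s_gt0 tau_gt0.
rewrite expr0n subr0; apply; rewrite lexx /=.
by have := sqrt_sqrD_gt tau_gt0 (ltW s_gt0); lra.
Qed.

End Profile.

Lemma musconvE (R : realType) (s tau : R) (xi : 'rV[R]_3) : enorm3 xi != 0 ->
  musconv s xi tau = 2 * pi / enorm3 xi * musconv_profile s tau (enorm3 xi).
Proof. by move=> /negbTE xi_neq0; rewrite /musconv xi_neq0. Qed.

Lemma musconv0 (R : realType) (s tau : R) :
  musconv s (0 : 'rV[R]_3) tau = 2 * pi * Num.sqrt (1 + 4 * s ^+ 2 / tau ^+ 2).
Proof.
rewrite /musconv /enorm3 big1 ?sqrtr0 ?eqxx // => i _.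
by rewrite mxE expr0n.
Qed.

Lemma musconv_le (R : realType) (s tau : R) (xi : 'rV[R]_3) : 0 < s -> 0 < tau ->
  musconv s xi tau <= 2 * pi * (1 + 2 * s / tau).
Proof.
move=> s_gt0 tau_gt0; have pi2_gt0 : 0 < 2 * pi :> R by rewrite mulr_gt0 ?pi_gt0.
have [xi_eq0 | xi_neq0] := eqVneq (enorm3 xi) 0.
  by rewrite /musconv xi_eq0 eqxx ler_pM2l // sqrt_musconv0_le.
have xi_gt0 : 0 < enorm3 xi by rewrite lt_neqAle eq_sym xi_neq0 sqrtr_ge0.
rewrite musconvE // -(mulrA (2 * pi)) (mulrC _^-1) ler_pM2l //.
exact: musconv_profile_div_le.
Qed.

Definition sup_musconv (R : realType) (s tau : R) : R :=
  sup [set musconv s xi tau | xi in [set: 'rV[R]_3]].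

Lemma sup_musconv_le (R : realType) (s tau : R) : 0 < s -> 0 < tau ->
  sup_musconv s tau <= 2 * pi * (1 + 2 * s / tau).
Proof.
move=> s_gt0 tau_gt0; apply: ge_sup; first by exists (musconv s 0 tau), 0.
by move=> _ [xi _ <-]; exact: musconv_le.
Qed.

Lemma musconv0_le_sup_musconv (R : realType) (s tau : R) : 0 < s -> 0 < tau ->
  2 * pi * Num.sqrt (1 + 4 * s ^+ 2 / tau ^+ 2) <= sup_musconv s tau.
Proof.
move=> s_gt0 tau_gt0; rewrite -musconv0; apply: ub_le_sup; last by exists 0.
by exists (2 * pi * (1 + 2 * s / tau)) => _ [xi _ <-]; exact: musconv_le.
Qed.

Lemma sup_musconv_cvg (R : realType) (s : R) : 0 < s ->
  sup_musconv s tau @[tau --> +oo] --> (2 * pi : R).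
Proof.
move=> s_gt0; have pi2_gt0 : 0 < 2 * pi :> R by rewrite mulr_gt0 ?pi_gt0.
have inv_cvg0 : (fun t : R => t^-1) @ +oo --> (0 : R).
  apply/(@gtr0_cvgV0 _ _ _ _ (fun t : R => t)); last exact: cvg_id.
  by exists 0; split => //; rewrite real0.
have upper_cvg : (fun t : R => 2 * pi * (1 + 2 * s / t)) @ +oo --> (2 * pi : R).
  rewrite [X in _ --> X](_ : _ = 2 * pi * (1 + 2 * s * 0)); last first.
    by rewrite mulr0 addr0 mulr1.
  by apply: cvgMr; apply: cvgD; [exact: cvg_cst | exact: cvgMr].
apply: (squeeze_cvgr _ (cvg_cst (2 * pi)) upper_cvg).
near=> t.
have t_gt0 : 0 < t by near: t; apply: nbhs_pinfty_gt; rewrite real0.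
rewrite sup_musconv_le // andbT.
apply: le_trans (musconv0_le_sup_musconv s_gt0 t_gt0).
rewrite ler_pMr // -{1}sqrtr1 ler_wsqrtr // lerDl.
by rewrite divr_ge0 ?exprn_ge0 ?mulr_ge0 //; lra.
Unshelve. all: end_near.
Qed.

Theorem lemma3p2 (R : realType) (s : R) (hs : 0 < s) :
  (forall tau : R, 0 < tau ->
     2 * pi * Num.sqrt (1 + 4 * s ^+ 2 / tau ^+ 2)
       <= sup [set musconv s xi tau | xi in [set: 'rV[R]_3]]
     /\ sup [set musconv s xi tau | xi in [set: 'rV[R]_3]]
       <= 2 * pi * (1 + 2 * s / tau))
  /\ sup [set musconv s xi tau | xi in [set: 'rV[R]_3]]
       @[tau --> +oo] --> (2 * pi : R).
Proof.
split; last exact: sup_musconv_cvg.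
move=> tau tau_gt0.
by split; [exact: musconv0_le_sup_musconv | exact: sup_musconv_le].
Qed.
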